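(* Let $f\in C^1[0,1]$ with $f(0)=0$, $h:=f'$, and let $q$ satisfy condition (q). If $$c>\sup_{\varphi\in(0,1]}\frac{f(\varphi)}{\varphi}+2\sqrt{\sup_{\varphi\in(0,1]}\frac{q(\varphi)}{\varphi}},$$ then there exists $z\in C[0,1]\cap C^1(0,1)$ with $\dot z(\varphi)=h(\varphi)-c-q(\varphi)/z(\varphi)$ and $z(\varphi)<0$ for $\varphi\in(0,1)$, and $z(0)=z(1)=0$.
   Context: Condition (q): $q\in C[0,1]$, $q>0$ on $(0,1)$, $q(0)=q(1)=0$, and $\limsup_{\varphi\to0^+}q(\varphi)/\varphi<+\infty$. *)

From Stdlib Require Import Reals.
From Coquelicot Require Import Coquelicot.
Open Scope R_scope.

Definition I01 (x : R) : Prop := 0 <= x <= 1.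
Definition Io01 (x : R) : Prop := 0 < x < 1.

Definition cont_on01 (g : R -> R) : Prop :=
  forall x, I01 x -> filterlim g (within I01 (locally x)) (locally (g x)).

Definition C1_on01 (f h : R -> R) : Prop :=
  (forall x, I01 x ->
     filterlim (fun y => (f y - f x) / (y - x))
       (within (fun y => I01 y /\ y <> x) (locally x)) (locally (h x)))
  /\ cont_on01 h.

(* Condition (q): q in C[0,1], q > 0 on (0,1), q(0)=q(1)=0 and
   limsup_{phi -> 0+} q(phi)/phi < +oo (i.e. q(phi)/phi is bounded above
   on some right neighbourhood (0,delta) of 0). *)
Definition cond_q (q : R -> R) : Prop :=
  cont_on01 q
  /\ (forall x, Io01 x -> 0 < q x)
  /\ q 0 = 0 /\ q 1 = 0
  /\ exists M delta, 0 < delta /\ forall phi, 0 < phi < delta -> q phi / phi <= M.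

Definition ratio_set (g : R -> R) : R -> Prop :=
  fun y => exists phi, 0 < phi <= 1 /\ y = g phi / phi.

(* 1. Calculus tools: sign of the derivative controls monotonicity, a strict
      barrier principle, uniform limits preserve continuity and derivatives.
   2. Picard iteration solves y' = G(s,y), y(1) = 0 on [0,1] for G continuous,
      bounded and globally Lipschitz in y.
   3. The regularised field h - c - q / min(z, -e) is such a G.  Comparison
      arguments show its solutions decrease as e decreases, lie below H(1-p),
      satisfy z^2 <= C(1-p), stay above lower barriers, and are <= -e on a
      compact subinterval of (0,1) once e is small.
   4. For e = 1/(n+1) -> 0 the solutions decrease to a limit which is locally
      a uniform limit of solutions of the true equation, hence solves it.
   5. The barrier f(p) - k p, with k given by c > sup f/p + 2 sqrt(sup q/p),
      squeezes the limit to 0 at p = 0; z^2 <= C(1-p) does so at p = 1. *)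
From Stdlib Require Import Reals Lra Lia Classical ZArith.
From Coquelicot Require Import Coquelicot.
Open Scope R_scope.
Set Bullet Behavior "Strict Subproofs".

(** * 1. Calculus tools *)

Lemma continuity_pt_eps (g : R -> R) (x : R) :
  continuity_pt g x -> forall eps, 0 < eps -> exists d, 0 < d /\
    forall y, Rabs (y - x) < d -> Rabs (g y - g x) < eps.
Proof.
  intros H eps Heps. destruct (H eps Heps) as [d [Hd H2]].
  exists d; split; auto. intros y Hy.
  destruct (Req_dec y x) as [->|Hne].
  - rewrite Rminus_diag, Rabs_R0; auto.
  - apply (H2 y). split; [split; [exact I| auto]|]. exact Hy.
Qed.

Lemma eps_continuity_pt (g : R -> R) (x : R) :
  (forall eps, 0 < eps -> exists d, 0 < d /\
    forall y, Rabs (y - x) < d -> Rabs (g y - g x) < eps) -> continuity_pt g x.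
Proof.
  intros H eps Heps. destruct (H eps Heps) as [d [Hd H2]].
  exists d; split; auto. intros y [_ Hy]. apply H2. exact Hy.
Qed.

Lemma derive_continuity_pt (g : R -> R) x l : is_derive g x l -> continuity_pt g x.
Proof.
  intros H. apply continuity_pt_filterlim. apply (ex_derive_continuous g x). exists l; exact H.
Qed.

Lemma deriv_nonpos_nonincr (g dg : R -> R) (a b : R) :
  a <= b ->
  (forall t, a < t < b -> is_derive g t (dg t)) ->
  (forall t, a <= t <= b -> continuity_pt g t) ->
  (forall t, a < t < b -> dg t <= 0) -> g b <= g a.
Proof.
  intros Hab Hd Hc Hs.
  destruct (Req_dec a b) as [->|Hne]; [lra|].
  assert (pr1 : forall c, a < c < b -> derivable_pt g c).
  { intros c Pc. exists (dg c). apply is_derive_Reals. now apply Hd. }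
  assert (pr2 : forall c, a < c < b -> derivable_pt id c).
  { intros c Pc. apply derivable_pt_id. }
  destruct (MVT g id a b pr1 pr2 ltac:(lra) Hc) as [c [P HM]].
  { intros; apply derivable_continuous_pt, derivable_pt_id. }
  assert (E1 : derive_pt g c (pr1 c P) = dg c).
  { apply derive_pt_eq_0. apply is_derive_Reals. now apply Hd. }
  assert (E2 : derive_pt id c (pr2 c P) = 1).
  { apply derive_pt_eq_0. apply derivable_pt_lim_id. }
  rewrite E1, E2 in HM. unfold id in HM. specialize (Hs c P).
  assert ((b - a) * dg c <= 0) by (apply Rmult_le_0_l; lra). lra.
Qed.

Lemma increases_to_the_right (g : R -> R) t d : is_derive g t d -> 0 < d ->
  forall eps, 0 < eps -> exists t', t < t' < t + eps /\ g t < g t'.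
Proof.
  intros Hd Hpos eps Heps. apply is_derive_Reals in Hd.
  destruct (Hd d Hpos) as [dd Hd2].
  set (e := Rmin (dd/2) (eps/2)).
  assert (He : 0 < e) by (apply Rmin_glb_lt; destruct dd; simpl; lra).
  assert (He1 : e <= dd/2) by apply Rmin_l. assert (He2 : e <= eps/2) by apply Rmin_r.
  assert (Hq : Rabs ((g (t + e) - g t) / e - d) < d).
  { apply Hd2; [lra|]. rewrite Rabs_right; lra. }
  rewrite Rabs_lt_between in Hq.
  exists (t + e). split; [lra|].
  assert (0 < (g (t + e) - g t) / e) by lra.
  assert (0 < g (t + e) - g t); [|lra].
  replace (g (t + e) - g t) with (((g (t + e) - g t) / e) * e) by (field; lra).
  apply Rmult_lt_0_compat; lra.
Qed.

(* If g' >= 0 wherever g > 0, then a function positive at a stays above g(a):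
   the set where g stays positive is closed under sup and open to the right. *)
Lemma nondecr_while_positive (g dg : R -> R) (a b : R) :
  a <= b ->
  (forall t, a < t < b -> is_derive g t (dg t)) ->
  (forall t, a <= t <= b -> continuity_pt g t) ->
  (forall t, a < t < b -> 0 < g t -> 0 <= dg t) -> 0 < g a -> g a <= g b.
Proof.
  intros Hab Hd Hc Hs Ha.
  set (E := fun u => a <= u <= b /\ forall v, a <= v <= u -> 0 < g v).
  assert (Ea : E a).
  { split; [lra|]. intros v Hv. replace v with a by lra. exact Ha. }
  assert (HE : bound E) by (exists b; intros u [Hu _]; lra).
  destruct (completeness E HE (ex_intro _ a Ea)) as [s [Hub Hlub]].
  assert (Has : a <= s) by (apply Hub, Ea).
  assert (Hsb : s <= b) by (apply Hlub; intros u [Hu _]; lra).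
  assert (Hbelow : forall v, a <= v < s -> 0 < g v).
  { intros v Hv. destruct (classic (exists u, E u /\ v <= u)) as [[u [[_ Hu] Hvu]]|Hn].
    - apply Hu; lra.
    - exfalso. assert (s <= v); [|lra]. apply Hlub. intros u Hu.
      destruct (Rle_dec u v) as [|Hnl]; auto. exfalso; apply Hn; exists u; split; auto; lra. }
  assert (Hgs : g a <= g s).
  { assert (- g s <= - g a); [|lra].
    apply (deriv_nonpos_nonincr (fun x => - g x) (fun x => - dg x) a s Has).
    - intros t Ht. apply (is_derive_opp g). apply Hd; lra.
    - intros t Ht. apply continuity_pt_opp. apply Hc; lra.
    - intros t Ht. assert (0 <= dg t); [|lra]. apply Hs; [lra|]. apply Hbelow; lra. }
  destruct (Req_dec s b) as [<-|Hsb']; auto.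
  exfalso.
  destruct (continuity_pt_eps g s (Hc s ltac:(lra)) (g s) ltac:(lra)) as [d [Hd0 Hd1]].
  set (r := Rmin (d/2) ((b - s)/2)).
  assert (Hr : 0 < r) by (apply Rmin_glb_lt; lra).
  assert (Hr1 : r <= d/2) by apply Rmin_l. assert (Hr2 : r <= (b - s)/2) by apply Rmin_r.
  assert (s + r <= s); [|lra].
  apply Hub. split; [lra|].
  intros v Hv. destruct (Rlt_dec v s) as [Hl|Hl]; [apply Hbelow; lra|].
  assert (Rabs (g v - g s) < g s) by (apply Hd1; rewrite Rabs_right; lra).
  rewrite Rabs_lt_between in H. lra.
Qed.

(* Strict barrier principle: if g' > 0 wherever g >= 0 and g(b) <= 0, then g < 0
   on (a,b) -- otherwise g would become positive and keep increasing up to b. *)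
Lemma strict_barrier (g dg : R -> R) (a b : R) :
  a <= b ->
  (forall t, a < t < b -> is_derive g t (dg t)) ->
  (forall t, a <= t <= b -> continuity_pt g t) ->
  (forall t, a < t < b -> 0 <= g t -> 0 < dg t) -> g b <= 0 ->
  forall t, a < t < b -> g t < 0.
Proof.
  intros Hab Hd Hc Hs Hb t Ht.
  destruct (Rlt_dec (g t) 0) as [|Hn]; auto. exfalso.
  destruct (increases_to_the_right g t (dg t) (Hd t Ht) (Hs t Ht ltac:(lra))
              (b - t) ltac:(lra)) as [t' [Ht' Hgt']].
  assert (g t' <= g b); [|lra].
  apply (nondecr_while_positive g dg t' b); try lra.
  - intros; apply Hd; lra.
  - intros; apply Hc; lra.
  - intros; apply Rlt_le, Hs; lra.
Qed.

Lemma lim_seq_le_eventually (v : nat -> R) (l c : R) (N : nat) :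
  is_lim_seq v l -> (forall n, (N <= n)%nat -> v n <= c) -> l <= c.
Proof.
  intros Hl Hv. apply (is_lim_seq_incr_n v N l) in Hl.
  apply (is_lim_seq_le (fun n => v (n + N)%nat) (fun _ => c) l c); auto.
  - intros n; apply Hv; lia.
  - apply is_lim_seq_const.
Qed.

Lemma lim_seq_ge_eventually (v : nat -> R) (l c : R) (N : nat) :
  is_lim_seq v l -> (forall n, (N <= n)%nat -> c <= v n) -> c <= l.
Proof.
  intros Hl Hv. apply (is_lim_seq_incr_n v N l) in Hl.
  apply (is_lim_seq_le (fun _ => c) (fun n => v (n + N)%nat) c l); auto.
  - intros n; apply Hv; lia.
  - apply is_lim_seq_const.
Qed.

Lemma uniform_limit_continuity_pt (u : nat -> R -> R) (y : R -> R) (a b x : R) :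
  a < x < b -> (forall n, continuity_pt (u n) x) ->
  (forall eps, 0 < eps -> exists N, forall n, (N <= n)%nat -> forall t, a < t < b ->
      Rabs (u n t - y t) <= eps) -> continuity_pt y x.
Proof.
  intros Hx Hc Hu. apply eps_continuity_pt. intros eps Heps.
  destruct (Hu (eps/4) ltac:(lra)) as [N HN].
  destruct (continuity_pt_eps (u N) x (Hc N) (eps/4) ltac:(lra)) as [d [Hd Hd1]].
  set (r := Rmin d (Rmin (x - a) (b - x))).
  assert (Hr : 0 < r) by (repeat apply Rmin_glb_lt; lra).
  exists r. split; auto. intros t Ht.
  pose proof (Rmin_l d (Rmin (x - a) (b - x))). pose proof (Rmin_r d (Rmin (x - a) (b - x))).
  pose proof (Rmin_l (x - a) (b - x)). pose proof (Rmin_r (x - a) (b - x)).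
  assert (Htab : a < t < b) by (unfold r in Ht; rewrite Rabs_lt_between in Ht; lra).
  pose proof (HN N (le_n N) t Htab) as Ht1. pose proof (HN N (le_n N) x Hx) as Hx1.
  assert (Hux : Rabs (u N t - u N x) < eps / 4) by (apply Hd1; unfold r in Ht; lra).
  rewrite Rabs_le_between in Ht1, Hx1. rewrite Rabs_lt_between in Hux |- *. lra.
Qed.

Lemma uniform_limit_derive (u du : nat -> R -> R) (y g : R -> R) (a b x : R) :
  a < x < b ->
  (forall n t, a < t < b -> is_derive (u n) t (du n t)) ->
  (forall t, a < t < b -> is_lim_seq (fun n => u n t) (y t)) ->
  (forall eps, 0 < eps -> exists N, forall n, (N <= n)%nat -> forall t, a < t < b ->
      Rabs (du n t - g t) <= eps) ->
  continuity_pt g x -> is_derive y x (g x).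
Proof.
  intros Hx Hd Hl Hu Hg. apply is_derive_Reals. intros eps Heps.
  destruct (Hu (eps/4) ltac:(lra)) as [N HN].
  destruct (continuity_pt_eps g x Hg (eps/4) ltac:(lra)) as [d [Hd0 Hd1]].
  assert (Hdel : 0 < Rmin d (Rmin (x - a) (b - x))) by (repeat apply Rmin_glb_lt; lra).
  exists (mkposreal _ Hdel). intros h Hh0 Hh. simpl in Hh.
  pose proof (Rmin_l d (Rmin (x - a) (b - x))). pose proof (Rmin_r d (Rmin (x - a) (b - x))).
  pose proof (Rmin_l (x - a) (b - x)). pose proof (Rmin_r (x - a) (b - x)).
  assert (Hhb := Hh). rewrite Rabs_lt_between in Hhb.
  assert (Hq : is_lim_seq (fun n => (u n (x + h) - u n x) / h) ((y (x + h) - y x) / h)).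
  { apply (is_lim_seq_scal_r _ (/ h) ((y (x + h) - y x))).
    apply (is_lim_seq_minus _ _ (y (x + h)) (y x)); [apply Hl; lra|apply Hl; lra|reflexivity]. }
  (* each difference quotient of u_n is a value of u_n', close to g(x) *)
  assert (Hquot : forall n, (N <= n)%nat ->
     Rabs ((u n (x + h) - u n x) / h - g x) <= eps / 2).
  { intros n Hn.
    assert (Hseg : forall t, Rmin x (x + h) <= t <= Rmax x (x + h) -> a < t < b).
    { intros t Ht. unfold Rmin, Rmax in Ht. destruct (Rle_dec x (x + h)); lra. }
    destruct (MVT_gen (u n) x (x + h) (du n)) as [c [Hc Hc2]].
    - intros t Ht. apply Hd, Hseg. lra.
    - intros t Ht. apply (derive_continuity_pt _ _ (du n t)), Hd, Hseg. exact Ht.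
    - assert (Hcx : Rabs (c - x) <= Rabs h).
      { unfold Rmin, Rmax in Hc. destruct (Rle_dec x (x + h));
        rewrite Rabs_le_between; split; rewrite ?Rabs_right, ?Rabs_left by lra; lra. }
      rewrite Hc2. replace (du n c * (x + h - x) / h) with (du n c) by (field; auto).
      pose proof (HN n Hn c (Hseg c ltac:(lra))) as Hc3.
      assert (Rabs (g c - g x) < eps / 4) by (apply Hd1; lra).
      rewrite Rabs_le_between in Hc3 |- *. rewrite Rabs_lt_between in H3. lra. }
  assert (Hup : (y (x + h) - y x) / h <= g x + eps / 2).
  { apply (lim_seq_le_eventually _ _ _ N Hq). intros n Hn. specialize (Hquot n Hn).
    rewrite Rabs_le_between in Hquot. lra. }
  assert (Hlo : g x - eps / 2 <= (y (x + h) - y x) / h).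
  { apply (lim_seq_ge_eventually _ _ _ N Hq). intros n Hn. specialize (Hquot n Hn).
    rewrite Rabs_le_between in Hquot. lra. }
  rewrite Rabs_lt_between. lra.
Qed.

Lemma geometric_small (M : R) : 0 <= M -> forall eps, 0 < eps -> exists N, forall n, (N <= n)%nat ->
  M * (/2) ^ n <= eps.
Proof.
  intros HM eps Heps.
  destruct (pow_lt_1_zero (/2) ltac:(rewrite Rabs_right; lra) (eps / (M + 1)))
    as [N HN]. { apply Rdiv_lt_0_compat; lra. }
  exists N. intros n Hn. specialize (HN n Hn).
  rewrite Rabs_right in HN by (apply Rle_ge, pow_le; lra).
  assert (0 <= (/2)^n) by (apply pow_le; lra).
  apply Rle_trans with ((M + 1) * (/ 2) ^ n).
  - apply Rmult_le_compat_r; lra.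
  - apply Rlt_le. replace eps with ((M + 1) * (eps / (M + 1))) by (field; lra).
    apply Rmult_lt_compat_l; lra.
Qed.

Lemma small_inv_nat (e : R) : 0 < e -> exists N : nat, / (INR N + 1) <= e.
Proof.
  intros He. destruct (archimed (/ e)) as [H1 _].
  pose proof (Rinv_0_lt_compat e He).
  assert (Hpos : (0 < up (/ e))%Z) by (apply lt_IZR; simpl; lra).
  exists (Z.to_nat (up (/ e))).
  rewrite INR_IZR_INZ, Z2Nat.id by lia.
  rewrite <- (Rinv_inv e) at 2.
  apply Rinv_le_contravar; lra.
Qed.

Lemma bounded01 (g : R -> R) : (forall x, continuity_pt g x) ->
  exists M, 0 <= M /\ forall x, 0 <= x <= 1 -> Rabs (g x) <= M.
Proof.
  intros Hg.
  destruct (continuity_ab_maj g 0 1 ltac:(lra) (fun c _ => Hg c)) as [xM [HM _]].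
  destruct (continuity_ab_min g 0 1 ltac:(lra) (fun c _ => Hg c)) as [xm [Hm _]].
  pose proof (Rabs_pos (g xM)); pose proof (Rabs_pos (g xm)).
  exists (Rabs (g xM) + Rabs (g xm)). split; [lra|].
  intros x Hx. specialize (HM x Hx). specialize (Hm x Hx).
  pose proof (Rle_abs (g xM)). pose proof (Rle_abs (- g xm)). rewrite Rabs_Ropp in H2.
  rewrite Rabs_le_between. lra.
Qed.

(** * 2. Global existence by Picard iteration *)

(* The retraction of R onto [0,1]; composing with it extends data given on
   [0,1] to all of R without changing it on [0,1]. *)
Definition clamp (x : R) : R := Rmax 0 (Rmin 1 x).

Lemma clamp_lip x y : Rabs (clamp x - clamp y) <= Rabs (x - y).
Proof.
  unfold clamp, Rmax, Rmin.
  repeat (destruct Rle_dec); rewrite ?Rminus_diag, ?Rabs_R0; try apply Rabs_pos;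
  repeat match goal with |- context [Rabs ?e] =>
    destruct (Rle_dec 0 e); [rewrite (Rabs_right e) by lra|rewrite (Rabs_left e) by lra] end; lra.
Qed.

Lemma clamp_cont x : continuity_pt clamp x.
Proof.
  apply eps_continuity_pt. intros eps Heps. exists eps; split; auto.
  intros y Hy. eapply Rle_lt_trans; [apply clamp_lip|exact Hy].
Qed.

Lemma clamp_id x : 0 <= x <= 1 -> clamp x = x.
Proof. intros H. unfold clamp, Rmax, Rmin. repeat destruct Rle_dec; lra. Qed.

Lemma clamp_in x : 0 <= clamp x <= 1.
Proof. unfold clamp, Rmax, Rmin. repeat destruct Rle_dec; lra. Qed.

Lemma clamp_idem x : clamp (clamp x) = clamp x.
Proof. apply clamp_id, clamp_in. Qed.

Lemma RInt_derive_from_one (g : R -> R) :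
  (forall x, continuity_pt g x) -> forall x, is_derive (fun b => RInt g 1 b) x (g x).
Proof.
  intros Hg x. apply (is_derive_RInt g (fun b => RInt g 1 b) 1 x).
  - apply filter_forall. intros b. apply (RInt_correct (V := R_CompleteNormedModule)).
    apply (ex_RInt_continuous (V := R_CompleteNormedModule)).
    intros z _. apply continuity_pt_filterlim, Hg.
  - apply continuity_pt_filterlim, Hg.
Qed.

Definition Gcont (G : R -> R -> R) : Prop :=
  forall u, (forall x, continuity_pt u x) -> forall x, continuity_pt (fun s => G s (u s)) x.

Lemma bound_by_deriv (D W dD dW : R -> R) (x : R) :
  0 <= x <= 1 ->
  (forall t, x < t < 1 -> is_derive D t (dD t)) ->
  (forall t, x < t < 1 -> is_derive W t (dW t)) ->
  (forall t, x <= t <= 1 -> continuity_pt D t) ->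
  (forall t, x <= t <= 1 -> continuity_pt W t) ->
  (forall t, x < t < 1 -> Rabs (dD t) <= - dW t) ->
  D 1 = 0 -> 0 <= W 1 -> Rabs (D x) <= W x.
Proof.
  intros Hx HD HW HcD HcW Hb H1 H2.
  assert (A1 : (fun t => W t - D t) 1 <= (fun t => W t - D t) x).
  { apply (deriv_nonpos_nonincr (fun t => W t - D t) (fun t => dW t - dD t) x 1); [lra| | |].
    - intros t Ht. apply (is_derive_minus W D); auto.
    - intros t Ht. apply continuity_pt_minus; auto.
    - intros t Ht. specialize (Hb t Ht). rewrite Rabs_le_between in Hb. lra. }
  assert (A2 : (fun t => W t + D t) 1 <= (fun t => W t + D t) x).
  { apply (deriv_nonpos_nonincr (fun t => W t + D t) (fun t => dW t + dD t) x 1); [lra| | |].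
    - intros t Ht. apply (is_derive_plus W D); auto.
    - intros t Ht. apply continuity_pt_plus; auto.
    - intros t Ht. specialize (Hb t Ht). rewrite Rabs_le_between in Hb. lra. }
  simpl in A1, A2. rewrite Rabs_le_between. lra.
Qed.

Section Picard.

Variable G : R -> R -> R.
Variables L B : R.
Hypothesis G_cont : Gcont G.
Hypothesis L_pos : 0 < L.
Hypothesis G_lip : forall s y1 y2, Rabs (G s y1 - G s y2) <= L * Rabs (y1 - y2).
Hypothesis G_bound : forall s y, Rabs (G s y) <= B.

Lemma bound_nonneg : 0 <= B.
Proof. specialize (G_bound 0 0). pose proof (Rabs_pos (G 0 0)). lra. Qed.

Fixpoint picard (k : nat) : R -> R :=
  match k with
  | O => fun _ => 0
  | S k => fun x => RInt (fun s => G s (picard k s)) 1 (clamp x)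
  end.

Lemma picard_cont k x : continuity_pt (picard k) x.
Proof.
  revert x. induction k as [|k IH]; intros x; simpl.
  - apply continuity_pt_const. intros a b; reflexivity.
  - apply (continuity_pt_comp clamp (fun b => RInt (fun s => G s (picard k s)) 1 b)).
    + apply clamp_cont.
    + apply (derive_continuity_pt _ _ _ (RInt_derive_from_one _ (G_cont _ IH) _)).
Qed.

Lemma picard_deriv k x : 0 < x < 1 -> is_derive (picard (S k)) x (G x (picard k x)).
Proof.
  intros Hx.
  apply (is_derive_ext_loc (fun b => RInt (fun s => G s (picard k s)) 1 b)).
  - assert (Hd : 0 < Rmin x (1 - x)) by (apply Rmin_glb_lt; lra).
    exists (mkposreal _ Hd). intros y Hy. simpl. rewrite clamp_id; auto.
    unfold ball in Hy; simpl in Hy; unfold AbsRing_ball, abs, minus, plus, opp in Hy; simpl in Hy.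
    pose proof (Rmin_l x (1 - x)). pose proof (Rmin_r x (1 - x)).
    rewrite Rabs_lt_between in Hy. lra.
  - apply (RInt_derive_from_one _ (G_cont _ (picard_cont k))).
Qed.

Lemma picard_one k : picard k 1 = 0.
Proof.
  destruct k; simpl; auto. rewrite clamp_id by lra.
  apply (RInt_point (V := R_CompleteNormedModule)).
Qed.

(* Weighted majorant of the k-th Picard increment: the weight e^{2L(1-x)}
   absorbs the Lipschitz constant, leaving a contraction factor 1/2. *)
Definition increment_bound (k : nat) (x : R) : R :=
  B / (2 * L) * (/2) ^ k * exp (2 * L * (1 - x)).

Lemma increment_bound_deriv k x :
  is_derive (increment_bound k) x (- (2 * L) * increment_bound k x).
Proof.
  unfold increment_bound. auto_derive; auto. replace (1 + - x) with (1 - x) by ring. ring.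
Qed.

Lemma increment_bound_nonneg k x : 0 <= increment_bound k x.
Proof.
  pose proof bound_nonneg. unfold increment_bound.
  apply Rmult_le_pos; [|apply Rlt_le, exp_pos].
  apply Rmult_le_pos; [apply Rmult_le_pos; [lra|]; apply Rlt_le, Rinv_0_lt_compat; lra|].
  apply pow_le. lra.
Qed.

Lemma increment_bound_le k x : 0 <= x <= 1 ->
  increment_bound k x <= B / (2 * L) * exp (2 * L) * (/2) ^ k.
Proof.
  intros Hx. pose proof bound_nonneg. unfold increment_bound.
  assert (exp (2 * L * (1 - x)) <= exp (2 * L)).
  { destruct (Req_dec x 0) as [->|Hx0].
    - rewrite Rminus_0_r, Rmult_1_r. lra.
    - apply Rlt_le, exp_increasing. nra. }
  assert (0 <= B / (2 * L)) by (apply Rmult_le_pos; [lra|apply Rlt_le, Rinv_0_lt_compat; lra]).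
  assert (0 <= (/2) ^ k) by (apply pow_le; lra).
  replace (B / (2 * L) * exp (2 * L) * (/ 2) ^ k)
    with (B / (2 * L) * (/ 2) ^ k * exp (2 * L)) by ring.
  apply Rmult_le_compat_l; auto. apply Rmult_le_pos; auto.
Qed.

Lemma picard_increment k x : 0 <= x <= 1 ->
  Rabs (picard (S k) x - picard k x) <= increment_bound k x.
Proof.
  revert x. induction k as [|k IH]; intros x Hx.
  - apply (bound_by_deriv (fun t => picard 1 t - picard 0 t) (increment_bound 0)
             (fun t => G t (picard 0 t) - 0) (fun t => - (2 * L) * increment_bound 0 t) x Hx).
    + intros t Ht. apply (is_derive_minus (picard 1) (picard 0)); [apply picard_deriv; lra|].
      apply (is_derive_const (K := R_AbsRing) (V := R_NormedModule) 0).
    + intros; apply increment_bound_deriv.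
    + intros t Ht. apply continuity_pt_minus; apply picard_cont.
    + intros; apply (derive_continuity_pt _ _ _ (increment_bound_deriv 0 _)).
    + intros t Ht. rewrite Rminus_0_r. eapply Rle_trans; [apply G_bound|].
      unfold increment_bound. simpl. pose proof bound_nonneg.
      assert (1 <= exp (2 * L * (1 - t))).
      { pose proof (exp_ineq1_le (2 * L * (1 - t))).
        assert (0 <= 2 * L * (1 - t)) by (apply Rmult_le_pos; lra). lra. }
      replace (- (- (2 * L) * (B / (2 * L) * 1 * exp (2 * L * (1 - t))))) with
         (B * exp (2 * L * (1 - t))) by (field; lra).
      rewrite <- (Rmult_1_r B) at 1. apply Rmult_le_compat_l; lra.
    + rewrite !picard_one. ring.
    + apply increment_bound_nonneg.
  - apply (bound_by_deriv (fun t => picard (S (S k)) t - picard (S k) t) (increment_bound (S k))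
             (fun t => G t (picard (S k) t) - G t (picard k t))
             (fun t => - (2 * L) * increment_bound (S k) t) x Hx).
    + intros t Ht. apply (is_derive_minus (picard (S (S k))) (picard (S k)));
      apply picard_deriv; lra.
    + intros; apply increment_bound_deriv.
    + intros t Ht. apply continuity_pt_minus; apply picard_cont.
    + intros; apply (derive_continuity_pt _ _ _ (increment_bound_deriv (S k) _)).
    + intros t Ht. eapply Rle_trans; [apply G_lip|].
      replace (- (- (2 * L) * increment_bound (S k) t))
        with (L * increment_bound k t) by (unfold increment_bound; simpl; field; lra).
      apply Rmult_le_compat_l; [lra|]. apply IH; lra.
    + rewrite !picard_one. ring.
    + apply increment_bound_nonneg.
Qed.

Definition picard_const : R := 2 * (B / (2 * L) * exp (2 * L)).

Lemma picard_const_nonneg : 0 <= picard_const.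
Proof.
  pose proof bound_nonneg. unfold picard_const.
  apply Rmult_le_pos; [lra|]. apply Rmult_le_pos; [|apply Rlt_le, exp_pos].
  apply Rmult_le_pos; [lra|apply Rlt_le, Rinv_0_lt_compat; lra].
Qed.

Lemma picard_cauchy x k j : 0 <= x <= 1 ->
  Rabs (picard (k + j) x - picard k x) <= picard_const * ((/2) ^ k - (/2) ^ (k + j)).
Proof.
  intros Hx. induction j as [|j IH].
  - rewrite Nat.add_0_r, !Rminus_diag, Rabs_R0, Rmult_0_r. lra.
  - rewrite Nat.add_succ_r.
    pose proof (picard_increment (k + j) x Hx).
    pose proof (increment_bound_le (k + j) x Hx).
    replace (picard (S (k + j)) x - picard k x) with
      ((picard (S (k + j)) x - picard (k + j) x) + (picard (k + j) x - picard k x)) by ring.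
    eapply Rle_trans; [apply Rabs_triang|].
    change ((/2) ^ (S (k + j))) with (/2 * (/2) ^ (k + j)).
    unfold picard_const in *.
    set (K := B / (2 * L) * exp (2 * L)) in *. set (p := (/2) ^ (k + j)) in *.
    set (a := (/2) ^ k) in *. lra.
Qed.

Definition picard_sol (x : R) : R := Lim_seq (fun k => picard k (clamp x)).

Lemma picard_sol_lim x : 0 <= x <= 1 ->
  is_lim_seq (fun k => picard k x) (picard_sol x) /\
  forall k, Rabs (picard k x - picard_sol x) <= picard_const * (/2) ^ k.
Proof.
  intros Hx. pose proof picard_const_nonneg as HM.
  assert (Hc := picard_cauchy x). set (M := picard_const) in *.
  assert (Hp : forall N p, (N <= p)%nat -> Rabs (picard p x - picard N x) <= M * (/2) ^ N).
  { intros N p Hp. replace p with (N + (p - N))%nat by lia.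
    eapply Rle_trans; [apply Hc; exact Hx|].
    assert (0 <= M * (/2) ^ (N + (p - N))) by (apply Rmult_le_pos; [lra|apply pow_le; lra]).
    rewrite Rmult_minus_distr_l. lra. }
  assert (Hex : ex_finite_lim_seq (fun k => picard k x)).
  { apply ex_lim_seq_cauchy_corr. intros [eps Heps]. simpl.
    destruct (geometric_small M HM (eps/4) ltac:(lra)) as [N HN].
    exists N. intros n m Hn Hm.
    pose proof (Hp N n Hn). pose proof (Hp N m Hm). specialize (HN N (le_n N)).
    replace (picard n x - picard m x)
      with ((picard n x - picard N x) - (picard m x - picard N x)) by ring.
    eapply Rle_lt_trans; [apply Rabs_triang|]. rewrite Rabs_Ropp. lra. }
  assert (Hl : is_lim_seq (fun k => picard k x) (picard_sol x)).
  { unfold picard_sol. rewrite clamp_id by auto. destruct Hex as [l Hl].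
    rewrite (is_lim_seq_unique _ _ Hl). exact Hl. }
  split; auto.
  intros k.
  assert (Hl2 : is_lim_seq (fun n => picard n x - picard k x) (picard_sol x - picard k x)).
  { apply (is_lim_seq_minus _ _ (picard_sol x) (picard k x)); auto.
    apply is_lim_seq_const. reflexivity. }
  rewrite Rabs_minus_sym, Rabs_le_between. split.
  - apply (lim_seq_ge_eventually _ _ _ k Hl2). intros n Hn.
    specialize (Hp k n Hn). rewrite Rabs_le_between in Hp. lra.
  - apply (lim_seq_le_eventually _ _ _ k Hl2). intros n Hn.
    specialize (Hp k n Hn). rewrite Rabs_le_between in Hp. lra.
Qed.

Theorem picard_sol_spec :
  (forall x, continuity_pt picard_sol x) /\ picard_sol 1 = 0 /\
  forall x, 0 < x < 1 -> is_derive picard_sol x (G x (picard_sol x)).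
Proof.
  pose proof picard_const_nonneg as HM.
  assert (Hcont : forall x, continuity_pt picard_sol x).
  { intros x. apply (uniform_limit_continuity_pt (fun k t => picard k (clamp t)) _ (x - 1) (x + 1));
      [lra| |].
    - intros n. apply (continuity_pt_comp clamp (picard n)); [apply clamp_cont|apply picard_cont].
    - intros eps Heps. destruct (geometric_small _ HM eps Heps) as [N HN]. exists N.
      intros n Hn t _.
      replace (picard_sol t) with (picard_sol (clamp t)) by (unfold picard_sol; rewrite clamp_idem; auto).
      destruct (picard_sol_lim (clamp t) (clamp_in t)) as [_ Hb].
      eapply Rle_trans; [apply Hb|]. apply HN; auto. }
  split; auto. split.
  - unfold picard_sol. rewrite clamp_id by lra.
    rewrite (Lim_seq_ext _ (fun _ => 0)) by (intros; apply picard_one).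
    rewrite Lim_seq_const. reflexivity.
  - intros x Hx.
    apply (uniform_limit_derive (fun n => picard (S n)) (fun n t => G t (picard n t)) picard_sol
             (fun t => G t (picard_sol t)) 0 1 x Hx).
    + intros n t Ht. apply picard_deriv; auto.
    + intros t Ht. destruct (picard_sol_lim t ltac:(lra)) as [Hl _].
      apply (is_lim_seq_incr_1 (fun n => picard n t)). exact Hl.
    + intros eps Heps.
      destruct (geometric_small (L * picard_const) ltac:(apply Rmult_le_pos; lra) eps Heps)
        as [N HN].
      exists N. intros n Hn t Ht. eapply Rle_trans; [apply G_lip|].
      destruct (picard_sol_lim t ltac:(lra)) as [_ Hb].
      specialize (Hb n). specialize (HN n Hn). rewrite Rmult_assoc in HN.
      eapply Rle_trans; [|exact HN]. apply Rmult_le_compat_l; lra.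
    + apply G_cont. exact Hcont.
Qed.

End Picard.

(** * 3. The regularised problem *)

Lemma Rmin_lip a b c : Rabs (Rmin a c - Rmin b c) <= Rabs (a - b).
Proof.
  unfold Rmin. repeat destruct Rle_dec;
  repeat match goal with |- context [Rabs ?e] =>
    destruct (Rle_dec 0 e); [rewrite (Rabs_right e) by lra|rewrite (Rabs_left e) by lra] end; lra.
Qed.

Lemma neg_div_mono q a b : 0 <= q -> a <= b -> b < 0 -> - (q / a) <= - (q / b).
Proof.
  intros Hq Hab Hb.
  assert (/ b - / a = (a - b) / (a * b)) by (field; lra).
  assert ((a - b) / (a * b) <= 0).
  { unfold Rdiv. apply Rmult_le_0_r; [lra|]. apply Rlt_le, Rinv_0_lt_compat. nra. }
  unfold Rdiv. nra.
Qed.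

Section Regularized.

(* hh, qq: continuous extensions to R of h and q; H and Qm bound |hh - c|
   and qq. *)
Variables (hh qq : R -> R) (c H Qm : R).
Hypothesis hh_cont : forall x, continuity_pt hh x.
Hypothesis qq_cont : forall x, continuity_pt qq x.
Hypothesis hh_bound : forall x, Rabs (hh x - c) <= H.
Hypothesis qq_bound : forall x, 0 <= qq x <= Qm.

Lemma H_nonneg : 0 <= H.
Proof. specialize (hh_bound 0). pose proof (Rabs_pos (hh 0 - c)). lra. Qed.

Lemma qq_nonneg x : 0 <= qq x.
Proof. apply qq_bound. Qed.

Definition reg_field (e s z : R) : R := hh s - c - qq s / Rmin z (- e).

Lemma reg_field_true e s y : y <= - e -> reg_field e s y = hh s - c - qq s / y.
Proof. intros Hy. unfold reg_field. rewrite Rmin_left by lra. reflexivity. Qed.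

Lemma reg_field_cut e s y : - e <= y -> reg_field e s y = hh s - c + qq s / e.
Proof.
  intros Hy. unfold reg_field. rewrite Rmin_right by lra. unfold Rdiv. rewrite Rinv_opp. ring.
Qed.

Lemma reg_field_cont e : 0 < e -> Gcont (reg_field e).
Proof.
  intros He u Hu x. unfold reg_field.
  apply continuity_pt_minus;
    [apply continuity_pt_minus; [apply hh_cont|apply continuity_pt_const; intros ??; auto]|].
  apply continuity_pt_div; auto.
  - apply eps_continuity_pt. intros eps Heps.
    destruct (continuity_pt_eps u x (Hu x) eps Heps) as [d [Hd Hu']].
    exists d; split; auto. intros y Hy. eapply Rle_lt_trans; [apply Rmin_lip|]. auto.
  - pose proof (Rmin_r (u x) (-e)). lra.
Qed.

(* The cut-off makes the field Lipschitz with constant Qm/e^2 (+1 to keep it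
   positive). *)
Lemma reg_field_lip e s y1 y2 : 0 < e ->
  Rabs (reg_field e s y1 - reg_field e s y2) <= (Qm / (e * e) + 1) * Rabs (y1 - y2).
Proof.
  intros He. unfold reg_field.
  set (m1 := Rmin y1 (-e)). set (m2 := Rmin y2 (-e)).
  assert (H1 : m1 <= -e) by apply Rmin_r. assert (H2 : m2 <= -e) by apply Rmin_r.
  assert (Hm : Rabs (m1 - m2) <= Rabs (y1 - y2)) by apply Rmin_lip.
  replace (hh s - c - qq s / m1 - (hh s - c - qq s / m2)) with (qq s * (m1 - m2) / (m1 * m2))
    by (field; lra).
  assert (Hp : e * e <= m1 * m2) by nra.
  assert (Hee : 0 < e * e) by nra.
  destruct (qq_bound s) as [Hq0 HqM].
  unfold Rdiv. rewrite !Rabs_mult, Rabs_inv.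
  rewrite (Rabs_right (m1 * m2)), (Rabs_right (qq s)) by nra.
  pose proof (Rabs_pos (y1 - y2)). pose proof (Rabs_pos (m1 - m2)).
  assert (Hinv : / (m1 * m2) <= / (e * e)) by (apply Rinv_le_contravar; lra).
  assert (0 < / (e * e)) by (apply Rinv_0_lt_compat; lra).
  apply Rle_trans with (Qm * Rabs (y1 - y2) * / (e * e)); [|nra].
  apply Rle_trans with (qq s * Rabs (m1 - m2) * / (e * e)); [apply Rmult_le_compat_l; nra|].
  apply Rmult_le_compat_r; [lra|]. apply Rmult_le_compat; lra.
Qed.

Lemma reg_field_bound e s y : 0 < e -> Rabs (reg_field e s y) <= H + Qm / e.
Proof.
  intros He. unfold reg_field.
  assert (Hm : Rmin y (-e) <= -e) by apply Rmin_r.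
  destruct (qq_bound s) as [Hq0 HqM].
  eapply Rle_trans; [apply Rabs_triang|]. apply Rplus_le_compat; auto.
  rewrite Rabs_Ropp. unfold Rdiv. rewrite Rabs_mult, Rabs_inv.
  rewrite (Rabs_right (qq s)) by lra. rewrite (Rabs_left (Rmin y (-e))) by lra.
  apply Rmult_le_compat; try lra. apply Rlt_le, Rinv_0_lt_compat; lra.
  apply Rinv_le_contravar; lra.
Qed.

Lemma reg_field_mono e s y1 y2 : 0 < e -> y1 <= y2 -> reg_field e s y1 <= reg_field e s y2.
Proof.
  intros He Hy. unfold reg_field.
  assert (Rmin y1 (-e) <= Rmin y2 (-e)) by (unfold Rmin; repeat destruct Rle_dec; lra).
  assert (Rmin y2 (-e) <= -e) by apply Rmin_r.
  pose proof (neg_div_mono (qq s) _ _ (qq_nonneg s) H0 ltac:(lra)). lra.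
Qed.

Lemma reg_field_mono_eps e e' s y : 0 < e' -> e' <= e -> reg_field e s y <= reg_field e' s y.
Proof.
  intros He Hee. unfold reg_field.
  assert (Rmin y (-e) <= Rmin y (-e')) by (unfold Rmin; repeat destruct Rle_dec; lra).
  assert (Rmin y (-e') <= -e') by apply Rmin_r.
  pose proof (neg_div_mono (qq s) _ _ (qq_nonneg s) H0 ltac:(lra)). lra.
Qed.

Lemma reg_field_le_true e s y : y < 0 -> reg_field e s y <= hh s - c - qq s / y.
Proof.
  intros Hy. unfold reg_field.
  assert (Rmin y (-e) <= y) by apply Rmin_l.
  pose proof (neg_div_mono (qq s) _ _ (qq_nonneg s) H0 Hy). lra.
Qed.

Lemma reg_field_ge e s y : 0 < e -> hh s - c <= reg_field e s y.
Proof.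
  intros He. unfold reg_field.
  assert (Rmin y (-e) <= -e) by apply Rmin_r.
  assert (qq s / Rmin y (- e) <= 0).
  { unfold Rdiv. apply Rmult_le_0_l; [apply qq_nonneg|]. apply Rlt_le, Rinv_lt_0_compat. lra. }
  lra.
Qed.

Definition reg_sol (e : R) (y : R -> R) : Prop :=
  (forall x, continuity_pt y x) /\ y 1 = 0 /\
  forall x, 0 < x < 1 -> is_derive y x (reg_field e x (y x)).

Lemma reg_sol_exists e : 0 < e -> reg_sol e (picard_sol (reg_field e)).
Proof.
  intros He. assert (0 <= Qm / (e * e)).
  { apply Rmult_le_pos; [pose proof (qq_bound 0); lra|].
    apply Rlt_le, Rinv_0_lt_compat. nra. }
  apply (picard_sol_spec _ (Qm / (e * e) + 1) (H + Qm / e)).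
  - apply reg_field_cont; auto.
  - lra.
  - intros; apply reg_field_lip; auto.
  - intros; apply reg_field_bound; auto.
Qed.

(* Since y' >= hh - c >= -H, solutions lie below H (1 - p). *)
Lemma reg_sol_upper e y : 0 < e -> reg_sol e y -> forall p, 0 <= p <= 1 -> y p <= H * (1 - p).
Proof.
  intros He [Hc [H1 Hd]] p Hp.
  assert (A : (fun t => H * (1 - t) - y t) 1 <= (fun t => H * (1 - t) - y t) p).
  { apply (deriv_nonpos_nonincr (fun t => H * (1 - t) - y t)
             (fun t => - H - reg_field e t (y t)) p 1); [lra| | |].
    - intros t Ht. apply (is_derive_minus (fun t => H * (1 - t)) y); [|apply Hd; lra].
      auto_derive; auto; ring.
    - intros t Ht. apply continuity_pt_minus; auto.
      apply (derive_continuity_pt _ _ (-H)). auto_derive; auto; ring.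
    - intros t Ht. pose proof (reg_field_ge e t (y t) He). specialize (hh_bound t).
      rewrite Rabs_le_between in hh_bound. lra. }
  simpl in A. rewrite H1 in A. lra.
Qed.

Lemma reg_sol_mono_eps e e' y y' : 0 < e' -> e' <= e ->
  reg_sol e y -> reg_sol e' y' -> forall p, 0 <= p <= 1 -> y' p <= y p.
Proof.
  intros He' Hee [Hc [H1 Hd]] [Hc' [H1' Hd']] p Hp.
  destruct (Rle_dec (y' p) (y p)) as [|Hn]; auto. exfalso.
  assert (Hp1 : p < 1) by (destruct (Req_dec p 1) as [->|]; [rewrite H1, H1' in Hn; lra|lra]).
  assert (A : (fun t => y' t - y t) p <= (fun t => y' t - y t) 1).
  { apply (nondecr_while_positive (fun t => y' t - y t)
             (fun t => reg_field e' t (y' t) - reg_field e t (y t)) p 1);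
      [lra| | | |simpl; lra].
    - intros t Ht. apply (is_derive_minus y' y); [apply Hd'|apply Hd]; lra.
    - intros t Ht. apply continuity_pt_minus; auto.
    - intros t Ht Hpos.
      pose proof (reg_field_mono e' t (y t) (y' t) He' ltac:(lra)).
      pose proof (reg_field_mono_eps e e' t (y t) He' Hee). lra. }
  simpl in A. rewrite H1, H1' in A. lra.
Qed.

(* Energy estimate: (y^2/2)' = y y' >= -(H Kb + Qm), so y^2 <= 2 C (1 - p);
   this controls the solutions near p = 1. *)
Lemma reg_sol_sq e Kb y : 0 < e -> reg_sol e y -> (forall t, 0 < t < 1 -> Rabs (y t) <= Kb) ->
  forall p, 0 <= p <= 1 -> y p * y p <= 2 * (H * Kb + Qm) * (1 - p).
Proof.
  intros He [Hc [H1 Hd]] HK p Hp.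
  set (C := H * Kb + Qm).
  assert (A : (fun t => - (y t * y t / 2 + C * t)) 1 <= (fun t => - (y t * y t / 2 + C * t)) p).
  { apply (deriv_nonpos_nonincr (fun t => - (y t * y t / 2 + C * t))
             (fun t => - (y t * reg_field e t (y t) + C)) p 1); [lra| | |].
    - intros t Ht. apply (is_derive_opp (fun t => y t * y t / 2 + C * t)).
      apply (is_derive_plus (fun t => y t * y t / 2) (fun t => C * t)).
      + apply (is_derive_ext (fun t => / 2 * (y t * y t)));
          [intros tt; simpl; unfold Rdiv; ring|].
        replace (y t * reg_field e t (y t))
          with (/2 * (reg_field e t (y t) * y t + y t * reg_field e t (y t))) by field.
        apply (is_derive_scal (fun t => y t * y t)).
        apply (is_derive_mult (K := R_AbsRing) y y); [apply Hd; lra|apply Hd; lra|].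
        intros; apply Rmult_comm.
      + auto_derive; auto; ring.
    - intros t Ht. apply continuity_pt_opp, continuity_pt_plus.
      + apply continuity_pt_mult; [apply continuity_pt_mult; auto|].
        apply continuity_pt_const; intros ??; auto.
      + apply (derive_continuity_pt _ _ C). auto_derive; auto; ring.
    - intros t Ht. assert (-C <= y t * reg_field e t (y t)); [|lra].
      specialize (HK t ltac:(lra)). destruct (qq_bound t) as [Hq0 HqM].
      pose proof (hh_bound t) as Hh. pose proof H_nonneg.
      assert (Hb1 : - (H * Kb) <= (hh t - c) * y t).
      { assert (Rabs ((hh t - c) * y t) <= H * Kb).
        { rewrite Rabs_mult. apply Rmult_le_compat; auto; apply Rabs_pos. }
        rewrite Rabs_le_between in H2. lra. }
      unfold reg_field.
      destruct (Rle_dec (y t) (-e)) as [Hle|Hgt].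
      + rewrite Rmin_left by lra.
        replace (y t * (hh t - c - qq t / y t)) with ((hh t - c) * y t - qq t) by (field; lra).
        unfold C; lra.
      + rewrite Rmin_right by lra.
        replace (y t * (hh t - c - qq t / - e))
          with ((hh t - c) * y t + qq t * (y t / e)) by (field; lra).
        assert (-1 <= y t / e).
        { apply (Rmult_le_reg_r e); [lra|]. unfold Rdiv. rewrite Rmult_assoc, Rinv_l by lra. lra. }
        unfold C; nra. }
  simpl in A. rewrite H1 in A. nra.
Qed.

Lemma reg_sol_above_barrier e y (b db : R -> R) : 0 < e -> reg_sol e y ->
  (forall t, 0 < t < 1 -> is_derive b t (db t)) -> (forall t, 0 <= t <= 1 -> continuity_pt b t) ->
  b 1 < 0 -> (forall t, 0 < t < 1 -> b t < 0 /\ hh t - c - qq t / b t < db t) ->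
  forall t, 0 < t < 1 -> b t < y t.
Proof.
  intros He [Hc [H1 Hd]] Hbd Hbc Hb1 Hbar t Ht.
  assert (b t - y t < 0); [|lra].
  apply (strict_barrier (fun t => b t - y t) (fun t => db t - reg_field e t (y t)) 0 1);
    auto; try lra.
  - intros s Hs. apply (is_derive_minus b y); auto.
  - intros s Hs. apply continuity_pt_minus; auto.
  - intros s Hs Hg. destruct (Hbar s Hs) as [Hb0 Hb2].
    pose proof (reg_field_mono e s (y s) (b s) He ltac:(lra)).
    pose proof (reg_field_le_true e s (b s) Hb0). lra.
Qed.

(* Where qq >= qm > 0 and e is small, the cut-off field is large, so y cannot
   reach -e on [a, bb] without exceeding the bound H (1 - p) further right. *)
Lemma reg_sol_neg e y a bb qm : 0 < e -> reg_sol e y -> 0 < a -> a < bb -> bb < 1 -> 0 < qm ->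
  (forall t, a <= t <= (bb + 1) / 2 -> qm <= qq t) -> e <= 1/2 ->
  H + 4 * (H + 1) / ((1 - bb) / 2) <= qm / e ->
  forall t, a <= t <= bb -> y t < - e.
Proof.
  intros He Hs Ha Hab Hb1 Hqm Hqmb He2 Hr t Ht.
  pose proof Hs as [Hc [H1 Hd]]. pose proof H_nonneg as HH.
  set (b' := (bb + 1) / 2) in *.
  set (r := qm / e - H).
  assert (Hr0 : 4 * (H + 1) / ((1 - bb) / 2) <= r) by (unfold r; lra).
  assert (Hrb : H + 1 <= r * (b' - bb) / 4).
  { unfold b'. replace (r * ((bb + 1) / 2 - bb) / 4) with (r * ((1 - bb) / 2) / 4) by field.
    apply (Rmult_le_compat_r ((1 - bb) / 2 / 4)) in Hr0; [|lra].
    replace (4 * (H + 1) / ((1 - bb) / 2) * ((1 - bb) / 2 / 4)) with (H + 1) in Hr0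
      by (field; lra).
    lra. }
  assert (Hrpos : 0 < r).
  { assert (0 < 4 * (H + 1) / ((1 - bb) / 2)) by (apply Rdiv_lt_0_compat; lra). lra. }
  assert (Hup : forall s, a <= s <= b' -> - e <= y s -> r <= reg_field e s (y s)).
  { intros s Hs0 Hys. rewrite reg_field_cut by auto.
    pose proof (hh_bound s) as Hh. rewrite Rabs_le_between in Hh.
    assert (qm / e <= qq s / e).
    { unfold Rdiv. apply Rmult_le_compat_r; [apply Rlt_le, Rinv_0_lt_compat; lra|].
      apply Hqmb; lra. }
    unfold r; lra. }
  destruct (Rlt_dec (y t) (-e)) as [|Hn]; auto. exfalso.
  assert (Hyt : -e <= y t) by lra.
  destruct (increases_to_the_right y t _ (Hd t ltac:(lra))
              ltac:(specialize (Hup t ltac:(unfold b'; lra) Hyt); lra)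
              ((b' - bb) / 2) ltac:(unfold b'; lra)) as [t' [Ht' Hyt']].
  (* from t' on, y + e grows at least like r/2 until b' *)
  assert (A : (fun s => y s + e - r / 2 * (s - t')) t' <= (fun s => y s + e - r / 2 * (s - t')) b').
  { apply (nondecr_while_positive (fun s => y s + e - r / 2 * (s - t'))
             (fun s => reg_field e s (y s) - r / 2) t' b'); [unfold b' in *; lra| | | |lra].
    - intros s Hs0. apply (is_derive_ext (fun s => y s + (e - r / 2 * (s - t'))));
        [intros; simpl; ring|].
      replace (reg_field e s (y s) - r / 2) with (reg_field e s (y s) + (- (r / 2))) by ring.
      apply (is_derive_plus (K := R_AbsRing) y (fun s => e - r / 2 * (s - t'))).
      + apply Hd. unfold b' in *; lra.
      + auto_derive; auto; ring.
    - intros s Hs0. apply continuity_pt_minus; [apply continuity_pt_plus; auto|].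
      + apply continuity_pt_const; intros ??; auto.
      + apply (derive_continuity_pt _ _ (r / 2)). auto_derive; auto; ring.
    - intros s Hs0 Hg. assert (Hys : -e <= y s).
      { assert (0 <= r / 2 * (s - t')) by (apply Rmult_le_pos; lra). lra. }
      pose proof (Hup s ltac:(unfold b' in *; lra) Hys). lra. }
  simpl in A.
  pose proof (reg_sol_upper e y He Hs b' ltac:(unfold b'; lra)).
  assert (r / 2 * (b' - t') >= r * (b' - bb) / 4) by (unfold b' in *; nra).
  assert (H * (1 - b') <= H) by (unfold b'; nra).
  lra.
Qed.

(* Two solutions both below -e on [a, bb] solve the true equation there; the
   ordering y' <= y makes their gap y - y' nondecreasing. *)
Lemma reg_sol_gap_mono e e' y y' a bb : 0 < e' -> e' <= e ->
  reg_sol e y -> reg_sol e' y' -> 0 < a -> a <= bb -> bb < 1 ->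
  (forall t, a <= t <= bb -> y' t <= y t <= - e) ->
  forall t, a <= t <= bb -> y t - y' t <= y bb - y' bb.
Proof.
  intros He' Hee [Hc [H1 Hd]] [Hc' [H1' Hd']] Ha Hab Hb Hord t Ht.
  assert (A : (fun s => - (y s - y' s)) bb <= (fun s => - (y s - y' s)) t).
  { apply (deriv_nonpos_nonincr (fun s => - (y s - y' s))
             (fun s => - (reg_field e s (y s) - reg_field e' s (y' s))) t bb); [lra| | |].
    - intros s Hs. apply (is_derive_opp (fun s => y s - y' s)).
      apply (is_derive_minus y y'); [apply Hd|apply Hd']; lra.
    - intros s Hs. apply continuity_pt_opp, continuity_pt_minus; auto.
    - intros s Hs. destruct (Hord s ltac:(lra)) as [O1 O2].
      rewrite (reg_field_true e s (y s)), (reg_field_true e' s (y' s)) by lra.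
      pose proof (neg_div_mono (qq s) (y' s) (y s) (qq_nonneg s) O1 ltac:(lra)). lra. }
  simpl in A. lra.
Qed.

(** * 4. Passage to the limit e -> 0 *)

Hypothesis qq_pos : forall t, 0 < t < 1 -> 0 < qq t.
Variable b : R -> R.
Hypothesis b_cont : forall t, continuity_pt b t.
Hypothesis b_below : forall e y, 0 < e -> reg_sol e y -> forall t, 0 < t < 1 -> b t < y t.

Definition eps_n (n : nat) : R := / (INR n + 1).

Lemma eps_n_pos n : 0 < eps_n n.
Proof. unfold eps_n. apply Rinv_0_lt_compat. pose proof (pos_INR n). lra. Qed.

Lemma eps_n_decr n m : (n <= m)%nat -> eps_n m <= eps_n n.
Proof.
  intros Hnm. unfold eps_n. apply Rinv_le_contravar; [pose proof (pos_INR n); lra|].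
  apply le_INR in Hnm. lra.
Qed.

Definition approx (n : nat) : R -> R := picard_sol (reg_field (eps_n n)).

Lemma approx_sol n : reg_sol (eps_n n) (approx n).
Proof. apply reg_sol_exists, eps_n_pos. Qed.

Lemma approx_decr n m p : (n <= m)%nat -> 0 <= p <= 1 -> approx m p <= approx n p.
Proof.
  intros Hnm Hp. apply (reg_sol_mono_eps (eps_n n) (eps_n m));
    auto using eps_n_pos, eps_n_decr, approx_sol.
Qed.

Lemma approx_bounded : exists Kb, forall n t, 0 < t < 1 -> Rabs (approx n t) <= Kb.
Proof.
  destruct (bounded01 b b_cont) as [Mb [HMb0 HMb]].
  exists (H + Mb). intros n t Ht. pose proof H_nonneg.
  pose proof (b_below _ _ (eps_n_pos n) (approx_sol n) t Ht).
  pose proof (reg_sol_upper _ _ (eps_n_pos n) (approx_sol n) t ltac:(lra)).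
  specialize (HMb t ltac:(lra)). rewrite Rabs_le_between in HMb |- *. nra.
Qed.

Definition lim_sol (p : R) : R := real (Lim_seq (fun n => approx n p)).

Lemma lim_sol_is_lim p : 0 < p <= 1 -> is_lim_seq (fun n => approx n p) (lim_sol p).
Proof.
  intros Hp.
  assert (Hex : ex_finite_lim_seq (fun n => approx n p)).
  { destruct (Req_dec p 1) as [->|Hp1].
    - exists 0. apply (is_lim_seq_ext (fun _ => 0)); [intros n; symmetry; apply approx_sol|].
      apply is_lim_seq_const.
    - apply (ex_finite_lim_seq_decr _ (b p)).
      + intros n. apply approx_decr; [lia|lra].
      + intros n. apply Rlt_le, (b_below _ _ (eps_n_pos n) (approx_sol n)). lra. }
  destruct Hex as [l Hl]. unfold lim_sol. rewrite (is_lim_seq_unique _ _ Hl). exact Hl.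
Qed.

Lemma lim_sol_one : lim_sol 1 = 0.
Proof.
  unfold lim_sol. rewrite (Lim_seq_ext _ (fun _ => 0)) by (intros n; apply approx_sol).
  rewrite Lim_seq_const. reflexivity.
Qed.

Lemma lim_sol_above_barrier p : 0 < p < 1 -> b p <= lim_sol p.
Proof.
  intros Hp. apply (lim_seq_ge_eventually _ _ _ 0 (lim_sol_is_lim p ltac:(lra))).
  intros n _. apply Rlt_le, (b_below _ _ (eps_n_pos n) (approx_sol n)). lra.
Qed.

Lemma lim_sol_le_approx n p : 0 < p <= 1 -> lim_sol p <= approx n p.
Proof.
  intros Hp. apply (lim_seq_le_eventually _ _ _ n (lim_sol_is_lim p Hp)).
  intros m Hm. apply approx_decr; auto; lra.
Qed.

Lemma lim_sol_sq : exists C, 0 <= C /\ forall p, 0 < p <= 1 -> lim_sol p * lim_sol p <= C * (1 - p).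
Proof.
  destruct approx_bounded as [Kb HKb].
  assert (HKb0 : 0 <= Kb) by (specialize (HKb 0%nat (/2) ltac:(lra)); pose proof (Rabs_pos (approx 0 (/2))); lra).
  exists (2 * (H * Kb + Qm)). split.
  { pose proof H_nonneg. pose proof (qq_bound 0). nra. }
  intros p Hp. apply (lim_seq_le_eventually (fun n => approx n p * approx n p) _ _ 0).
  - apply is_lim_seq_mult'; apply lim_sol_is_lim; auto.
  - intros n _. apply (reg_sol_sq (eps_n n)); auto using eps_n_pos, approx_sol. lra.
Qed.

(* Around each x in (0,1), all late approximate solutions are <= -e_N on a
   fixed interval [a, bb]: there they solve the true equation. *)
Lemma approx_neg_locally x : 0 < x < 1 -> exists a bb N, 0 < a < x /\ x < bb < 1 /\
  forall n, (N <= n)%nat -> forall t, a <= t <= bb -> approx n t <= - eps_n N.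
Proof.
  intros Hx. set (a := x / 2). set (bb := (x + 1) / 2).
  destruct (continuity_ab_min qq a ((bb + 1) / 2) ltac:(unfold a, bb; lra) (fun c _ => qq_cont c))
    as [xm [Hxm Hxm2]].
  set (qm := qq xm).
  assert (Hqm : 0 < qm) by (apply qq_pos; unfold a, bb in *; lra).
  set (A := 4 * (H + 1) / ((1 - bb) / 2)).
  pose proof H_nonneg.
  assert (HA : 0 < A) by (unfold A, bb; apply Rdiv_lt_0_compat; lra).
  set (e0 := Rmin (1/2) (qm / (H + A))).
  assert (He0 : 0 < e0) by (apply Rmin_glb_lt; [lra|apply Rdiv_lt_0_compat; lra]).
  destruct (small_inv_nat e0 He0) as [N HN]. fold (eps_n N) in HN.
  pose proof (eps_n_pos N). pose proof (Rmin_l (1/2) (qm / (H + A))).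
  pose proof (Rmin_r (1/2) (qm / (H + A))).
  exists a, bb, N. split; [unfold a; lra|]. split; [unfold bb; lra|].
  assert (HyN : forall t, a <= t <= bb -> approx N t < - eps_n N).
  { apply (reg_sol_neg (eps_n N) (approx N) a bb qm); auto using approx_sol;
      try (unfold a, bb; lra).
    - unfold e0 in HN. lra.
    - fold A. unfold e0 in HN.
      assert (Hx1 : (H + A) * eps_n N <= qm).
      { apply Rle_trans with ((H + A) * (qm / (H + A))).
        - apply Rmult_le_compat_l; lra.
        - right. field. lra. }
      apply (Rmult_le_reg_r (eps_n N)); auto. unfold Rdiv.
      rewrite Rmult_assoc, Rinv_l by lra. lra. }
  intros n Hn t Ht. apply Rle_trans with (approx N t).
  - apply approx_decr; auto. unfold a, bb in Ht; lra.
  - apply Rlt_le, HyN; auto.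
Qed.

Section Local.

Variables (a bb : R) (N : nat).
Hypothesis a_pos : 0 < a.
Hypothesis a_le_bb : a <= bb.
Hypothesis bb_lt1 : bb < 1.
Hypothesis approx_neg : forall n, (N <= n)%nat -> forall t, a <= t <= bb -> approx n t <= - eps_n N.

Lemma approx_gap_le n t : (N <= n)%nat -> a <= t <= bb ->
  approx n t - lim_sol t <= approx n bb - lim_sol bb.
Proof.
  intros Hn Ht.
  assert (Hm : forall m, (n <= m)%nat -> approx n t - approx m t <= approx n bb - approx m bb).
  { intros m Hm. apply (reg_sol_gap_mono (eps_n n) (eps_n m) (approx n) (approx m) a bb);
      auto using eps_n_pos, eps_n_decr, approx_sol.
    intros s Hs. split; [apply approx_decr; auto; lra|].
    pose proof (approx_neg n Hn s Hs). pose proof (eps_n_decr N n Hn). lra. }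
  assert (Hl : is_lim_seq (fun m => (approx n bb - approx m bb) - (approx n t - approx m t))
                 ((approx n bb - lim_sol bb) - (approx n t - lim_sol t))).
  { apply is_lim_seq_minus'; apply is_lim_seq_minus';
      (apply is_lim_seq_const || apply lim_sol_is_lim; lra). }
  assert (0 <= (approx n bb - lim_sol bb) - (approx n t - lim_sol t)); [|lra].
  apply (lim_seq_ge_eventually _ _ _ n Hl). intros m Hm'. specialize (Hm m Hm'). lra.
Qed.

Lemma approx_unif_conv eps : 0 < eps -> exists M, (N <= M)%nat /\
  forall n, (M <= n)%nat -> forall t, a <= t <= bb -> 0 <= approx n t - lim_sol t <= eps.
Proof.
  intros Heps.
  pose proof (lim_sol_is_lim bb ltac:(lra)) as Hlb.
  apply is_lim_seq_spec in Hlb. destruct (Hlb (mkposreal _ Heps)) as [M0 HM0].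
  exists (max N M0). split; [lia|]. intros n Hn t Ht. split.
  - pose proof (lim_sol_le_approx n t ltac:(lra)). lra.
  - eapply Rle_trans; [apply approx_gap_le; auto; lia|].
    assert (approx n bb <= approx (max N M0) bb) by (apply approx_decr; lra || lia).
    specialize (HM0 (max N M0) ltac:(lia)). simpl in HM0. rewrite Rabs_lt_between in HM0. lra.
Qed.

Lemma lim_sol_neg t : a <= t <= bb -> lim_sol t <= - eps_n N.
Proof.
  intros Ht. pose proof (lim_sol_le_approx N t ltac:(lra)).
  pose proof (approx_neg N (le_n N) t Ht). lra.
Qed.

Lemma lim_sol_cont x : a < x < bb -> continuity_pt lim_sol x.
Proof.
  intros Hx. apply (uniform_limit_continuity_pt approx lim_sol a bb x); auto.
  - intros n; apply approx_sol.
  - intros eps Heps. destruct (approx_unif_conv eps Heps) as [M [HM1 HM2]].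
    exists M. intros n Hn t Ht. specialize (HM2 n Hn t ltac:(lra)). rewrite Rabs_right; lra.
Qed.

Definition lim_field (t : R) : R := hh t - c - qq t / lim_sol t.

Lemma lim_field_cont x : a < x < bb -> continuity_pt lim_field x.
Proof.
  intros Hx. pose proof (lim_sol_neg x ltac:(lra)). pose proof (eps_n_pos N).
  apply continuity_pt_minus.
  - apply continuity_pt_minus; auto. apply continuity_pt_const; intros ??; auto.
  - apply continuity_pt_div; auto using lim_sol_cont. lra.
Qed.

(* On [a, bb] the approximate fields are the true ones, which are Lipschitz
   there; so the derivatives converge uniformly to the true field. *)
Lemma lim_sol_derive x : a < x < bb -> is_derive lim_sol x (lim_field x).
Proof.
  intros Hx.
  apply (uniform_limit_derive approx (fun n t => reg_field (eps_n n) t (approx n t))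
           lim_sol lim_field a bb x); auto using lim_field_cont.
  - intros n t Ht. apply approx_sol. lra.
  - intros t Ht. apply lim_sol_is_lim. lra.
  - intros eps Heps. pose proof (eps_n_pos N).
    set (L := Qm / (eps_n N * eps_n N) + 1).
    assert (HL : 0 < L).
    { unfold L. assert (0 <= Qm / (eps_n N * eps_n N)); [|lra].
      apply Rmult_le_pos; [pose proof (qq_bound 0); lra|].
      apply Rlt_le, Rinv_0_lt_compat. nra. }
    destruct (approx_unif_conv (eps / L) ltac:(apply Rdiv_lt_0_compat; lra)) as [M [HM1 HM2]].
    exists M. intros n Hn t Ht.
    specialize (HM2 n Hn t ltac:(lra)).
    assert (Hyn : approx n t <= - eps_n N) by (apply approx_neg; lia || lra).
    pose proof (lim_sol_neg t ltac:(lra)).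
    pose proof (eps_n_decr N n ltac:(lia)).
    unfold lim_field.
    rewrite (reg_field_true (eps_n n)), <- (reg_field_true (eps_n N) t (approx n t)),
      <- (reg_field_true (eps_n N) t (lim_sol t)) by lra.
    eapply Rle_trans; [apply reg_field_lip; lra|].
    fold L. rewrite Rabs_right by lra.
    apply Rle_trans with (L * (eps / L)); [apply Rmult_le_compat_l; lra|right; field; lra].
Qed.

End Local.

Theorem lim_sol_solves x : 0 < x < 1 ->
  lim_sol x < 0 /\ continuity_pt lim_sol x /\ is_derive lim_sol x (hh x - c - qq x / lim_sol x).
Proof.
  intros Hx. destruct (approx_neg_locally x Hx) as [a [bb [N [Ha [Hb HN]]]]].
  assert (lim_sol x <= - eps_n N) by (apply (lim_sol_neg a bb N); auto; lra).
  pose proof (eps_n_pos N).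
  split; [lra|]. split.
  - apply (lim_sol_cont a bb N); auto; lra.
  - apply (lim_sol_derive a bb N); auto; lra.
Qed.

End Regularized.

(** * 5. Back to the data on [0,1] *)

Lemma within_eps (g : R -> R) (D : R -> Prop) x l :
  filterlim g (within D (locally x)) (locally l) ->
  forall eps, 0 < eps -> exists d, 0 < d /\
    forall y, D y -> Rabs (y - x) < d -> Rabs (g y - l) < eps.
Proof.
  intros H eps Heps. apply filterlim_locally with (eps := mkposreal _ Heps) in H.
  destruct H as [d Hd]. exists d; split; [apply cond_pos|].
  intros y Dy Hy. apply (Hd y); auto.
Qed.

Lemma eps_within (g : R -> R) (D : R -> Prop) x l :
  (forall eps, 0 < eps -> exists d, 0 < d /\
    forall y, D y -> Rabs (y - x) < d -> Rabs (g y - l) < eps) ->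
  filterlim g (within D (locally x)) (locally l).
Proof.
  intros H. apply filterlim_locally. intros [eps Heps].
  destruct (H eps Heps) as [d [Hd H2]]. exists (mkposreal _ Hd).
  intros y Hy Dy. apply H2; auto.
Qed.

Lemma cont01_clamp (g : R -> R) : cont_on01 g -> forall x, continuity_pt (fun x => g (clamp x)) x.
Proof.
  intros Hg x. apply eps_continuity_pt. intros eps Heps.
  destruct (within_eps g I01 (clamp x) (g (clamp x)) (Hg (clamp x) (clamp_in x)) eps Heps)
    as [d [Hd H]].
  exists d; split; auto. intros y Hy. apply H.
  - apply clamp_in.
  - eapply Rle_lt_trans; [apply clamp_lip|exact Hy].
Qed.

Lemma clamp_bounded (g : R -> R) (c : R) : cont_on01 g ->
  exists M, forall x, Rabs (g (clamp x) - c) <= M.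
Proof.
  intros Hg. destruct (bounded01 (fun x => g (clamp x) - c)) as [M [_ HM]].
  { intros x. apply continuity_pt_minus; [apply cont01_clamp, Hg|].
    apply continuity_pt_const. intros ??; auto. }
  exists M. intros x. rewrite <- clamp_idem. apply HM, clamp_in.
Qed.

Lemma C1_cont (f h : R -> R) : C1_on01 f h -> cont_on01 f.
Proof.
  intros [Hd _] x Hx. apply eps_within. intros eps Heps.
  destruct (within_eps _ _ x (h x) (Hd x Hx) 1 ltac:(lra)) as [d [Hd0 H]].
  set (K := Rabs (h x) + 1). assert (HK : 0 < K) by (pose proof (Rabs_pos (h x)); unfold K; lra).
  exists (Rmin d (eps / K)). split.
  { apply Rmin_glb_lt; auto. apply Rdiv_lt_0_compat; auto. }
  intros y Dy Hy.
  pose proof (Rmin_l d (eps / K)). pose proof (Rmin_r d (eps / K)).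
  destruct (Req_dec y x) as [->|Hne]; [rewrite Rminus_diag, Rabs_R0; auto|].
  assert (Hq := H y (conj Dy Hne) ltac:(lra)).
  replace (f y - f x) with ((f y - f x) / (y - x) * (y - x)) by (field; lra).
  rewrite Rabs_mult.
  assert (Rabs ((f y - f x) / (y - x)) <= K).
  { replace ((f y - f x) / (y - x)) with (((f y - f x) / (y - x) - h x) + h x) by ring.
    eapply Rle_trans; [apply Rabs_triang|]. unfold K; lra. }
  apply Rle_lt_trans with (K * Rabs (y - x)).
  - apply Rmult_le_compat_r; auto. apply Rabs_pos.
  - replace eps with (K * (eps / K)) by (field; lra). apply Rmult_lt_compat_l; lra.
Qed.

Lemma C1_deriv (f h : R -> R) : C1_on01 f h -> forall x, 0 < x < 1 ->
  is_derive (fun x => f (clamp x)) x (h x).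
Proof.
  intros [Hd _] x Hx. apply is_derive_Reals. intros eps Heps.
  destruct (within_eps _ _ x (h x) (Hd x ltac:(unfold I01; lra)) eps Heps) as [d [Hd0 H]].
  assert (Hdel : 0 < Rmin d (Rmin x (1 - x))) by (repeat apply Rmin_glb_lt; lra).
  exists (mkposreal _ Hdel). intros k Hk0 Hk. simpl in Hk.
  pose proof (Rmin_l d (Rmin x (1 - x))). pose proof (Rmin_r d (Rmin x (1 - x))).
  pose proof (Rmin_l x (1 - x)). pose proof (Rmin_r x (1 - x)).
  rewrite Rabs_lt_between in Hk.
  rewrite !clamp_id by lra.
  replace k with ((x + k) - x) at 2 by ring.
  apply H.
  - split; [unfold I01; lra|]. intros E; apply Hk0; lra.
  - rewrite Rabs_lt_between; lra.
Qed.

Lemma ratio_bound (g : R -> R) (S : R) : is_lub (ratio_set g) S ->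
  forall p, 0 < p <= 1 -> g p <= S * p.
Proof.
  intros [Hub _] p Hp.
  assert (g p / p <= S) by (apply Hub; exists p; split; auto).
  replace (g p) with (g p / p * p) by (field; lra). apply Rmult_le_compat_r; lra.
Qed.

(* The speed condition c > Sf + 2 sqrt Sq leaves room for a slope k with
   Sq < (c - k)(k - Sf): take k the midpoint of Sf and c. *)
Lemma choose_slope (c Sf Sq : R) : 0 <= Sq -> c > Sf + 2 * sqrt Sq ->
  exists k, Sf < k /\ k < c /\ Sq < (c - k) * (k - Sf).
Proof.
  intros HSq Hc. pose proof (sqrt_pos Sq). pose proof (sqrt_sqrt Sq HSq).
  exists ((c + Sf) / 2). split; [lra|]. split; [lra|].
  replace ((c - (c + Sf) / 2) * ((c + Sf) / 2 - Sf)) with (((c - Sf)/2) * ((c - Sf)/2)) by field.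
  assert (sqrt Sq < (c - Sf) / 2) by lra. nra.
Qed.

(* b(p) = f(p) - k p is a strict negative subsolution: b <= (Sf - k) p < 0 and
   q / (-b) <= Sq p / ((k - Sf) p) < c - k, i.e. h - c - q/b < h - k = b'. *)
Lemma linear_barrier (f h q : R -> R) (c k Sf Sq Qm : R) :
  C1_on01 f h -> (forall x, 0 <= q (clamp x) <= Qm) ->
  (forall p, 0 < p <= 1 -> f p <= Sf * p) -> (forall p, 0 < p <= 1 -> q p <= Sq * p) ->
  Sf < k -> k < c -> Sq < (c - k) * (k - Sf) ->
  forall e y, 0 < e -> reg_sol (fun x => h (clamp x)) (fun x => q (clamp x)) c e y ->
  forall t, 0 < t < 1 -> f (clamp t) - k * t < y t.
Proof.
  intros HC1 Hqb Hfle Hqle HkSf Hkc Hck e y He Hy.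
  assert (Hb : forall t, 0 < t <= 1 -> f (clamp t) - k * t <= (Sf - k) * t).
  { intros t Ht. rewrite clamp_id by lra. pose proof (Hfle t Ht). lra. }
  apply (reg_sol_above_barrier _ _ c Qm Hqb e y (fun p => f (clamp p) - k * p)
           (fun t => h t - k) He Hy).
  - intros t Ht. apply (is_derive_minus (fun p => f (clamp p)) (fun p => k * p)).
    + apply C1_deriv; auto.
    + auto_derive; auto; ring.
  - intros t _. apply continuity_pt_minus; [apply cont01_clamp, (C1_cont f h HC1)|].
    apply (derive_continuity_pt _ _ k). auto_derive; auto; ring.
  - pose proof (Hb 1 ltac:(lra)). nra.
  - intros t Ht. pose proof (Hb t ltac:(lra)). rewrite clamp_id in * by lra.
    assert (Hneg : f t - k * t < 0) by nra.
    split; [exact Hneg|].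
    assert (Hlt : q t < (c - k) * (- (f t - k * t))).
    { apply Rle_lt_trans with (Sq * t); [apply Hqle; lra|].
      apply Rlt_le_trans with ((c - k) * (k - Sf) * t); nra. }
    assert (q t / (f t - k * t) > k - c); [|lra].
    apply (Rmult_lt_reg_r (- (f t - k * t))); [lra|].
    replace (q t / (f t - k * t) * - (f t - k * t)) with (- q t) by (field; lra).
    lra.
Qed.

Definition zero_left (y : R -> R) (p : R) : R := if Rle_dec p 0 then 0 else y p.

Lemma zero_left_pos (y : R -> R) p : 0 < p -> zero_left y p = y p.
Proof. intros Hp. unfold zero_left. destruct (Rle_dec p 0); [lra|auto]. Qed.

Lemma zero_left_zero (y : R -> R) : zero_left y 0 = 0.
Proof. unfold zero_left. destruct (Rle_dec 0 0); [auto|lra]. Qed.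

Lemma zero_left_locally (y : R -> R) x : 0 < x -> locally x (fun t => y t = zero_left y t).
Proof.
  intros Hx. exists (mkposreal _ Hx). intros t Ht. simpl in Ht.
  unfold ball in Ht; simpl in Ht; unfold AbsRing_ball, abs, minus, plus, opp in Ht; simpl in Ht.
  rewrite Rabs_lt_between in Ht. rewrite zero_left_pos; auto. lra.
Qed.

Lemma zero_left_cont (y b : R -> R) (C : R) :
  continuity_pt b 0 -> b 0 = 0 -> y 1 = 0 -> 0 <= C ->
  (forall p, 0 < p < 1 -> b p <= y p /\ y p < 0 /\ continuity_pt y p) ->
  (forall p, 0 < p <= 1 -> y p * y p <= C * (1 - p)) ->
  cont_on01 (zero_left y).
Proof.
  intros Hbc Hb0 Hy1 HC Hy Hsq x Hx. unfold I01 in Hx. apply eps_within. intros eps Heps.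
  destruct (Req_dec x 0) as [->|Hx0]; [|destruct (Req_dec x 1) as [->|Hx1]].
  - destruct (continuity_pt_eps b 0 Hbc eps Heps) as [d [Hd Hd2]].
    exists (Rmin d (1/2)). split; [apply Rmin_glb_lt; lra|].
    intros p Hp Hpd. rewrite zero_left_zero, Rminus_0_r.
    pose proof (Rmin_l d (1/2)). pose proof (Rmin_r d (1/2)). unfold I01 in Hp.
    destruct (Req_dec p 0) as [->|Hp0]; [rewrite zero_left_zero, Rabs_R0; auto|].
    rewrite Rminus_0_r, Rabs_right in Hpd by lra.
    rewrite zero_left_pos by lra.
    specialize (Hd2 p ltac:(rewrite Rminus_0_r, Rabs_right; lra)). rewrite Hb0, Rminus_0_r in Hd2.
    destruct (Hy p ltac:(lra)) as [Hbp [Hn _]].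
    rewrite Rabs_left in Hd2 |- * by lra. lra.
  - exists (eps * eps / (C + 1)). split; [apply Rdiv_lt_0_compat; nra|].
    intros p Hp Hpd. unfold I01 in Hp.
    rewrite (zero_left_pos y 1), Hy1, Rminus_0_r by lra.
    destruct (Req_dec p 0) as [->|Hp0]; [rewrite zero_left_zero, Rabs_R0; auto|].
    rewrite zero_left_pos by lra. rewrite Rabs_left1 in Hpd by lra.
    assert (Hsq_eps : y p * y p < eps * eps).
    { eapply Rle_lt_trans; [apply Hsq; lra|].
      apply Rle_lt_trans with (C * (eps * eps / (C + 1))); [apply Rmult_le_compat_l; lra|].
      apply (Rmult_lt_reg_r (C + 1)); [lra|].
      replace (C * (eps * eps / (C + 1)) * (C + 1)) with (C * (eps * eps)) by (field; lra).
      nra. }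
    destruct (Rle_dec 0 (y p)); [rewrite Rabs_right by lra|rewrite Rabs_left by lra]; nra.
  - assert (Hcz : continuity_pt (zero_left y) x).
    { apply (continuity_pt_ext_loc y); [apply zero_left_locally; lra|apply Hy; lra]. }
    destruct (continuity_pt_eps _ x Hcz eps Heps) as [d [Hd Hd2]].
    exists d; split; auto.
Qed.

Lemma zero_left_derive (y g : R -> R) x : 0 < x < 1 ->
  (forall t, 0 < t < 1 -> is_derive y t (g t)) -> continuity_pt g x ->
  is_derive (zero_left y) x (g x) /\ continuous (Derive (zero_left y)) x.
Proof.
  intros Hx Hd Hg. split.
  - apply (is_derive_ext_loc y); [apply zero_left_locally; lra|apply Hd; auto].
  - apply (continuous_ext_loc _ g); [|apply continuity_pt_filterlim, Hg].
    assert (Hr : 0 < Rmin x (1 - x)) by (apply Rmin_glb_lt; lra).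
    exists (mkposreal _ Hr). intros t Ht. simpl in Ht.
    unfold ball in Ht; simpl in Ht; unfold AbsRing_ball, abs, minus, plus, opp in Ht; simpl in Ht.
    pose proof (Rmin_l x (1 - x)). pose proof (Rmin_r x (1 - x)).
    rewrite Rabs_lt_between in Ht.
    symmetry. apply is_derive_unique.
    apply (is_derive_ext_loc y); [apply zero_left_locally; lra|apply Hd; lra].
Qed.

Lemma cond_q_clamp (q : R -> R) : cond_q q -> exists Qm, forall x, 0 <= q (clamp x) <= Qm.
Proof.
  intros [Hqc [Hqpos [Hq0 [Hq1 _]]]].
  destruct (clamp_bounded q 0 Hqc) as [Qm HQm]. exists Qm. intros x.
  specialize (HQm x). rewrite Rminus_0_r in HQm. pose proof (Rle_abs (q (clamp x))).
  split; [|lra]. pose proof (clamp_in x).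
  destruct (Req_dec (clamp x) 0) as [->|Hc0]; [lra|].
  destruct (Req_dec (clamp x) 1) as [->|Hc1]; [lra|].
  apply Rlt_le, Hqpos. unfold Io01; lra.
Qed.

Theorem negative_profile (hh qq b : R -> R) (c H Qm : R) :
  (forall x, continuity_pt hh x) -> (forall x, continuity_pt qq x) ->
  (forall x, Rabs (hh x - c) <= H) -> (forall x, 0 <= qq x <= Qm) ->
  (forall t, 0 < t < 1 -> 0 < qq t) ->
  (forall t, continuity_pt b t) -> b 0 = 0 ->
  (forall e y, 0 < e -> reg_sol hh qq c e y -> forall t, 0 < t < 1 -> b t < y t) ->
  exists z : R -> R,
    cont_on01 z
    /\ (forall x, 0 < x < 1 ->
          is_derive z x (hh x - c - qq x / z x) /\ continuous (Derive z) x /\ z x < 0)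
    /\ z 0 = 0 /\ z 1 = 0.
Proof.
  intros Hhc Hqc Hhb Hqb Hqpos Hbc Hb0 Hbelow.
  pose proof (lim_sol_solves hh qq c H Qm Hhc Hqc Hhb Hqb Hqpos b Hbelow) as Hy.
  pose proof (lim_sol_one hh qq c H Qm Hhc Hqc Hhb Hqb) as Hy1.
  pose proof (lim_sol_above_barrier hh qq c H Qm Hhc Hqc Hhb Hqb b Hbelow) as Hyb.
  destruct (lim_sol_sq hh qq c H Qm Hhc Hqc Hhb Hqb b Hbc Hbelow) as [C [HC Hsq]].
  set (y := lim_sol hh qq c) in *.
  exists (zero_left y). split; [|split; [|split]].
  - apply (zero_left_cont y b C); auto.
    intros p Hp. destruct (Hy p Hp) as [? [? _]]. split; auto.
  - intros x Hx. destruct (Hy x Hx) as [Hneg [Hycont _]].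
    rewrite zero_left_pos by lra.
    assert (Hg : continuity_pt (fun t => hh t - c - qq t / y t) x).
    { apply continuity_pt_minus; [|apply continuity_pt_div; auto; lra].
      apply continuity_pt_minus; auto. apply continuity_pt_const; intros ??; auto. }
    destruct (zero_left_derive y _ x Hx (fun t Ht => proj2 (proj2 (Hy t Ht))) Hg) as [Hd Hdc].
    auto.
  - apply zero_left_zero.
  - rewrite zero_left_pos by lra. exact Hy1.
Qed.

Theorem lemma4p1 (f h q : R -> R) (c Sf Sq : R) :
  C1_on01 f h -> f 0 = 0 ->
  cond_q q ->
  is_lub (ratio_set f) Sf -> is_lub (ratio_set q) Sq ->
  c > Sf + 2 * sqrt Sq ->
  exists z : R -> R,
    cont_on01 z
    /\ (forall x, Io01 x ->
          is_derive z x (h x - c - q x / z x)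
          /\ continuous (Derive z) x
          /\ z x < 0)
    /\ z 0 = 0 /\ z 1 = 0.
Proof.
  intros HC1 Hf0 Hq Hflub Hqlub Hc.
  destruct (clamp_bounded h c (proj2 HC1)) as [H Hhb].
  destruct (cond_q_clamp q Hq) as [Qm Hqb].
  destruct Hq as [Hqc [Hqpos [_ [Hq1 _]]]].
  assert (HSq0 : 0 <= Sq) by (apply (proj1 Hqlub); exists 1; split; [lra|]; rewrite Hq1; field).
  destruct (choose_slope c Sf Sq HSq0 Hc) as [k [HkSf [Hkc Hck]]].
  destruct (negative_profile (fun x => h (clamp x)) (fun x => q (clamp x))
              (fun p => f (clamp p) - k * p) c H Qm) as [z [Hz [Hzd Hz01]]]; auto.
  - apply cont01_clamp, (proj2 HC1).
  - apply cont01_clamp, Hqc.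
  - intros t Ht. rewrite clamp_id by lra. apply Hqpos, Ht.
  - intros t. apply continuity_pt_minus; [apply cont01_clamp, (C1_cont f h HC1)|].
    apply (derive_continuity_pt _ _ k). auto_derive; auto; ring.
  - rewrite clamp_id, Hf0 by lra. ring.
  - exact (linear_barrier f h q c k Sf Sq Qm HC1 Hqb (ratio_bound f Sf Hflub)
             (ratio_bound q Sq Hqlub) HkSf Hkc Hck).
  - exists z. split; [exact Hz|split; [|exact Hz01]].
    intros x Hx. unfold Io01 in Hx.
    replace (h x - c - q x / z x) with (h (clamp x) - c - q (clamp x) / z x)
      by (now rewrite clamp_id by lra).
    apply Hzd, Hx.
Qed.
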